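(* Every search game (as defined in the context) with solitary-search dominant payoffs admits a pure Nash equilibrium that is location-maximizing.
   Context: A search game $G=(N,\Omega,\Pi,\mu,K,c,v)$ consists of: a finite set of players $N=\{1,\ldots,n\}$; a finite set $\Omega$ of locations; for each player $i$ a partition $\Pi_i$ of $\Omega$, with $\pi_i(\omega)$ the cell containing $\omega$; a common prior $\mu\in\Delta(\Omega)$ with $\mu(\pi_i)>0$ for every cell of every player, and $\mu(\omega|\pi_i)=\mu(\omega)/\mu(\pi_i)$ for $\omega\in\pi_i$; capacities $K_i\in\mathbb{N}$; costs $c_i:\{0,\ldots,K_i\}\to\mathbb{R}_{\ge0}$ with $c_i(0)=0$ and nondecreasing increments $c_i(k+1)-c_i(k)\ge c_i(k)-c_i(k-1)$; rewards $v_i^m(\omega)\ge0$ with $v_i^{m+1}(\omega)\le v_i^m(\omega)$; social values $v_{\mathfrak{s}}(\omega)\ge0$. A pure strategy $s_i$ assigns to each cell $\pi_i$ a subset $s_i(\pi_i)\subseteq\pi_i$ of size at most $K_i$; $S$ is the set of pure profiles. With $m_s(\omega)=\sum_{i}\mathbf{1}_{\omega\in s_i(\pi_i(\omega))}$, player $i$'s payoff is $u_i(s)=\sum_{\omega}\mu(\omega)\big[\mathbf{1}_{\omega\in s_i(\pi_i(\omega))}v_i^{m_s(\omega)}(\omega)-c_i(|s_i(\pi_i(\omega))|)\big]$; a pure Nash equilibrium is a pure profile from which no player gains by a unilateral deviation to another pure strategy. A pure profile $s$ is location-maximizing if $\sum_{\omega\in\Omega}\mathbf{1}_{m_s(\omega)\ge1}\ge\sum_{\omega\in\Omega}\mathbf{1}_{m_{s'}(\omega)\ge1}$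 for every $s'\in S$. Payoffs are solitary-search dominant if for every player $i$, every cell $\pi_i\in\Pi_i$ and all $\omega,\omega'\in\pi_i$: $\mu(\omega|\pi_i)v_i^1(\omega)\ge\mu(\omega'|\pi_i)v_i^2(\omega')$ and $\mu(\omega|\pi_i)v_i^1(\omega)\ge c_i(K_i)-c_i(K_i-1)$. *)

From HB Require Import structures.
From mathcomp Require Import all_boot all_order all_algebra.
From mathcomp Require Import reals.
Set Implicit Arguments. Unset Strict Implicit. Unset Printing Implicit Defensive.
Import Order.TTheory GRing.Theory Num.Theory.
Local Open Scope ring_scope.

(* Rewards v i m w are meaningful for m >= 1. *)
Record search_game (R : realType) (n : nat) (Omega : finType) := SearchGame {
  Pi : 'I_n -> {set {set Omega}};
  mu : Omega -> R;
  K : 'I_n -> nat;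
  c : 'I_n -> nat -> R;
  v : 'I_n -> nat -> Omega -> R;
  vs : Omega -> R; (* social values (not used by the statement) *)
  Pi_partition : forall i, partition (Pi i) [set: Omega];
  mu_ge0 : forall w, 0 <= mu w;
  mu_sum1 : \sum_(w : Omega) mu w = 1;
  mu_cell_gt0 : forall i C, C \in Pi i -> 0 < \sum_(w in C) mu w;
  c_ge0 : forall i k, (k <= K i)%N -> 0 <= c i k;
  c_0 : forall i, c i 0%N = 0;
  c_convex : forall i k, (0 < k)%N -> (k < K i)%N ->
    c i k - c i k.-1 <= c i k.+1 - c i k;
  v_ge0 : forall i m w, (0 < m)%N -> 0 <= v i m w;
  v_decr : forall i m w, (0 < m)%N -> v i m.+1 w <= v i m w;
  vs_ge0 : forall w, 0 <= vs w
}.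

Section SearchGameDefs.
Variables (R : realType) (n : nat) (Omega : finType) (G : search_game R n Omega).

Definition cell (i : 'I_n) (w : Omega) : {set Omega} := pblock (Pi G i) w.

Definition mu_set (C : {set Omega}) : R := \sum_(w in C) mu G w.

Definition mu_cond (w : Omega) (C : {set Omega}) : R := mu G w / mu_set C.

(* A pure strategy of player i: assigns to each cell a subset of it of size
   at most K_i (values on non-cells are irrelevant). *)
Definition strategy := {set Omega} -> {set Omega}.
Definition profile := 'I_n -> strategy.

Definition is_strategy (i : 'I_n) (si : strategy) : Prop :=
  forall C, C \in Pi G i -> si C \subset C /\ (#|si C| <= K G i)%N.

Definition is_profile (s : profile) : Prop := forall i, is_strategy i (s i).

Definition searches (s : profile) (i : 'I_n) (w : Omega) : bool :=
  w \in s i (cell i w).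

Definition msearch (s : profile) (w : Omega) : nat :=
  (\sum_(j < n) searches s j w)%N.

Definition payoff (i : 'I_n) (s : profile) : R :=
  \sum_(w : Omega) mu G w *
    ((searches s i w)%:R * v G i (msearch s w) w - c G i #|s i (cell i w)|).

Definition deviate (s : profile) (i : 'I_n) (t : strategy) : profile :=
  fun j => if j == i then t else s j.

Definition pure_nash (s : profile) : Prop :=
  is_profile s /\
  forall i t, is_strategy i t -> payoff i (deviate s i t) <= payoff i s.

Definition nsearched (s : profile) : nat := #|[set w | (0 < msearch s w)%N]|.

Definition location_maximizing (s : profile) : Prop :=
  is_profile s /\ forall s', is_profile s' -> (nsearched s' <= nsearched s)%N.

Definition solitary_search_dominant : Prop :=
  forall i C, C \in Pi G i -> forall w w', w \in C -> w' \in C ->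
    mu_cond w' C * v G i 2%N w' <= mu_cond w C * v G i 1%N w /\
    c G i (K G i) - c G i (K G i).-1 <= mu_cond w C * v G i 1%N w.

End SearchGameDefs.

From HB Require Import structures.
From mathcomp Require Import all_boot all_order all_algebra.
From mathcomp Require Import reals.
From mathcomp Require Import zify ring lra.
Set Implicit Arguments. Unset Strict Implicit. Unset Printing Implicit Defensive.
Import Order.TTheory GRing.Theory Num.Theory.

(* Each pair (player i, cell C of Pi_i) becomes an agent that holds exactly K_i
   resources: locations of C, or slots standing for unused units of capacity.  A location
   is worth (solitary?, mu(w|C) v^m(w)) to the agent, compared lexicographically, and a slot
   is worth the marginal cost it saves.  Solitary-search dominance makes this order agree
   with real payoffs, so an allocation in which no agent gains by swapping one resource is a
   pure Nash equilibrium of the search game; it also makes a solitary search strictly better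
   than anything else.
   Swap-stable allocations exist, as for player-specific matroid congestion games (Ackermann,
   Roeglin, Voecking): raise the agents' quotas one unit at a time, and after each new unit
   let the holders of the resource moved last swap it for their best alternative; this
   settles because the number of fragile holdings drops.  Starting from disjoint solitary
   searches covering as many locations as any profile does, coverage never decreases, since a
   solitary search is only given up for a solitary search of an uncovered location. *)

Section AllocationGame.
Variables (A X : finType) (disp : Order.disp_t) (V : orderType disp).
(* Agent [a] holds resources from [E a]; [f a x m] is the worth of [x] to [a] when [m] agents
   hold it; coverage counts the resources in [P]. *)
Variables (E : A -> {set X}) (f : A -> X -> nat -> V) (P : pred X).
Hypothesis f_decr : forall a x m, (f a x m.+1 <= f a x m)%O.
Hypothesis f_solo : forall a x y m, P x -> ~~ P y || (1 < m) -> (f a y m < f a x 1)%O.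

Definition allocation := {ffun A -> {set X}}.
Implicit Types (s t : allocation) (k : A -> nat).

Definition load s x := #|[set a | x \in s a]|.
Definition covered s := #|[set x | P x & 0 < load s x]|.
Definition feasible k s := forall a, s a \subset E a /\ #|s a| = k a.
Definition swap_stable s := forall a x y, x \in s a -> y \in E a :\: s a ->
  (f a y (load s y).+1 <= f a x (load s x))%O.
Definition equilibrium k s := feasible k s /\ swap_stable s.
Definition packing k s :=
  [forall a, (s a \subset [set x in E a | P x]) && (#|s a| <= k a)] &&
  [forall x, load s x <= 1].
Definition reassign s a S : allocation := [ffun a' => if a' == a then S else s a'].

Lemma f_nonincreasing a x : {homo f a x : m m' / m <= m' >-> (m' <= m)%O}.
Proof. exact: homo_leq (fun _ => lexx _) (fun _ _ _ h1 h2 => le_trans h2 h1) (f_decr a x). Qed.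

Lemma reassign_at s a S : reassign s a S a = S.
Proof. by rewrite ffunE eqxx. Qed.

Lemma reassign_other s a S a' : a' != a -> reassign s a S a' = s a'.
Proof. by rewrite ffunE => /negPf ->. Qed.

Lemma load_reassign s a S x : load (reassign s a S) x + (x \in s a) = load s x + (x \in S).
Proof.
rewrite /load (cardsD1 a) [in RHS](cardsD1 a) !inE reassign_at.
have -> : [set a' | x \in reassign s a S a'] :\ a = [set a' | x \in s a'] :\ a.
  by apply/setP => a'; rewrite !inE; case: eqVneq => // /reassign_other ->.
by case: (x \in s a); case: (x \in S); lia.
Qed.

Lemma load_reassign_add s a y x : y \notin s a ->
  load (reassign s a (y |: s a)) x = load s x + (x == y).
Proof.
move=> ys; have := load_reassign s a (y |: s a) x; rewrite !inE.
by case: eqVneq => [->|_]; rewrite ?(negPf ys) /=; lia.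
Qed.

Lemma load_reassign_swap s a r y x : r \in s a -> y \notin s a ->
  load (reassign s a (y |: s a :\ r)) x + (x == r) = load s x + (x == y).
Proof.
move=> rs ys; have := load_reassign s a (y |: s a :\ r) x; rewrite !inE.
case: (eqVneq x r) => [->|_]; first by rewrite rs /= orbF; lia.
by case: eqVneq => [->|_]; rewrite ?(negPf ys) /=; lia.
Qed.

Lemma covered_shift s (b : X -> nat) r : (forall x, load s x = b x + (x == r)) ->
  covered s = #|[set x | P x & 0 < b x]| + (P r && (b r == 0)).
Proof.
move=> sb; rewrite /covered (cardsD1 r) [X in _ = X + _](cardsD1 r) !inE sb eqxx.
have -> : [set x | P x & 0 < load s x] :\ r = [set x | P x & 0 < b x] :\ r.
  by apply/setP => x; rewrite !inE sb; case: eqVneq => //= _; rewrite addn0.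
by case: (P r); case: (b r) => /=; lia.
Qed.

Lemma packing_held k s a x : packing k s -> x \in s a -> [/\ x \in E a, P x & load s x = 1].
Proof.
move=> /andP [/forallP /(_ a) /andP [/subsetP sEP _] /forallP /(_ x) load1] xs.
have /sEP := xs; rewrite inE => /andP [xE Px]; split => //.
by apply/eqP; rewrite eqn_leq load1 card_gt0; apply/set0Pn; exists a; rewrite inE.
Qed.

(* Among packings of maximum coverage, one maximizing [rank_sum] has no improving swap to a
   free resource, as such a swap would increase [rank_sum]. *)
Definition solo_rank a x := #|[set z | (f a z 1 < f a x 1)%O]|.
Definition rank_sum s := \sum_a \sum_(x in s a) solo_rank a x.

Lemma solo_rank_lt a x y : (f a x 1 < f a y 1)%O -> solo_rank a x < solo_rank a y.
Proof.
move=> xy; apply: proper_card; apply/properP; split.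
  by apply/subsetP => z; rewrite !inE => /lt_trans; apply.
by exists x; rewrite !inE ?ltxx.
Qed.

Lemma rank_sum_reassign s a S : rank_sum (reassign s a S) + \sum_(x in s a) solo_rank a x =
  rank_sum s + \sum_(x in S) solo_rank a x.
Proof.
rewrite /rank_sum (bigD1 a) //= [in RHS](bigD1 a) //= reassign_at.
have -> : \sum_(a' | a' != a) \sum_(x in reassign s a S a') solo_rank a' x =
          \sum_(a' | a' != a) \sum_(x in s a') solo_rank a' x.
  by apply: eq_bigr => a' /reassign_other ->.
lia.
Qed.

Section PackingSwap.
Variables (k : A -> nat) (s : allocation) (a : A) (x y : X).
Hypotheses (s_packing : packing k s) (xs : x \in s a) (yE : y \in E a) (Py : P y)
  (y_free : load s y = 0).
Let t := reassign s a (y |: s a :\ x).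

Let ys : y \notin s a.
Proof.
apply: contra_eqN y_free => ys; rewrite -lt0n card_gt0.
by apply/set0Pn; exists a; rewrite inE.
Qed.

Let t_load z : load t z + (z == x) = load s z + (z == y).
Proof. exact: load_reassign_swap. Qed.

Lemma packing_swap : packing k t.
Proof.
have /andP [/forallP sub /forallP load1] := s_packing.
apply/andP; split; apply/forallP; last first.
  move=> z; have := t_load z; have := load1 z.
  by case: eqVneq => [->|_]; case: eqVneq => [->|_]; lia.
move=> a'; case: (eqVneq a' a) => [->|/reassign_other ->]; last exact: sub.
have /andP [sP sk] := sub a; rewrite reassign_at.
rewrite subUset sub1set !inE yE Py (subset_trans (subD1set _ _) sP) /=.
by rewrite cardsU1 !inE (negPf ys) andbF /= (cardsD1 x) xs in sk *.
Qed.

Lemma covered_swap : covered t = covered s.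
Proof.
have [_ Px x_load] := packing_held s_packing xs.
pose b z := load s z - (z == x).
have sb z : load s z = b z + (z == x) by rewrite /b; case: eqVneq => [->|_]; lia.
have tb z : load t z = b z + (z == y) by have := t_load z; rewrite sb; lia.
by rewrite (covered_shift tb) (covered_shift sb) /b x_load y_free eqxx Px Py sub0n.
Qed.

Lemma rank_sum_swap : rank_sum t + solo_rank a x = rank_sum s + solo_rank a y.
Proof.
have ysx : y \notin s a :\ x by rewrite inE negb_and ys orbT.
have := rank_sum_reassign s a (y |: s a :\ x).
rewrite -/t (big_setU1 _ ysx) (big_setD1 x xs) /=; lia.
Qed.

End PackingSwap.

Lemma exists_best_packing k : exists s, [/\ packing k s,
  forall t, packing k t -> covered t <= covered s &
  forall t, packing k t -> covered t = covered s -> rank_sum t <= rank_sum s].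
Proof.
have empty_packing : packing k [ffun => set0].
  apply/andP; split; apply/forallP => z; first by rewrite ffunE sub0set cards0.
  by rewrite /load (_ : [set a | z \in _] = set0) ?cards0 //; apply/setP => a;
    rewrite !inE ffunE inE.
case: (arg_maxnP covered empty_packing) => s1 s1_packing s1_max.
pose max_covered t := packing k t && (covered t == covered s1).
have s1_max_covered : max_covered s1 by rewrite /max_covered s1_packing eqxx.
case: (arg_maxnP rank_sum s1_max_covered) => s /andP [ps /eqP cs] s_max.
exists s; split => // t pt; first by rewrite cs; apply: s1_max.
by move=> ct; apply: s_max; rewrite /max_covered pt ct cs eqxx.
Qed.

Lemma best_packing_equilibrium k s : packing k s ->
  (forall t, packing k t -> covered t = covered s -> rank_sum t <= rank_sum s) ->
  equilibrium (fun a => #|s a|) s.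
Proof.
move=> ps best; split=> [a|a x y xs]; last rewrite inE => /andP [ys yE].
  have /andP [/forallP /(_ a) /andP [sEP _] _] := ps; split => //.
  by apply/subsetP => x /(subsetP sEP); rewrite inE => /andP [].
have [_ Px x_load] := packing_held ps xs.
rewrite x_load; case/boolP: (P y && (load s y == 0)) => [/andP [Py /eqP y_free]|].
  rewrite y_free leNgt; apply: contraTN (best _ (packing_swap ps xs yE Py y_free)
    (covered_swap ps xs yE Py y_free)) => /solo_rank_lt xy.
  by have := rank_sum_swap ps xs yE Py y_free; rewrite -ltnNge; lia.
by rewrite negb_and -lt0n -ltnS => nfree; apply/ltW/f_solo.
Qed.

Section Settling.
Variables (k : A -> nat) (b : X -> nat).

(* Loads are [b] plus one extra unit on [r], the resource moved last, and holdings are stable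
   with respect to [b]; a holding is robust if it stays stable when its own load goes up. *)
Definition b_stable s := forall a x y, x \in s a -> y \in E a :\: s a ->
  (f a y (b y).+1 <= f a x (b x))%O.
Definition robust s a x := [forall y in E a :\: s a, f a y (b y).+1 <= f a x (b x).+1]%O.
Definition fragility s := \sum_a #|[set x in s a | ~~ robust s a x]|.
Definition near_equilibrium s r :=
  [/\ feasible k s, forall x, load s x = b x + (x == r) & b_stable s].

Lemma near_equilibrium_robust s r : near_equilibrium s r ->
  (forall a, r \in s a -> robust s a r) -> equilibrium k s.
Proof.
move=> [feas sb stable] r_robust; split=> // a x y xs yE.
apply: (@le_trans _ _ (f a y (b y).+1)); first by apply: f_nonincreasing; rewrite sb ltnS leq_addr.
case: (eqVneq x r) => [xr|xr]; last by rewrite sb (negPf xr) addn0; apply: stable.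
by move: (r_robust a); rewrite -xr xs => /(_ isT) /forall_inP /(_ y yE); rewrite sb xr eqxx addn1.
Qed.

Section Step.
Variables (s : allocation) (r : X) (a : A) (r' : X).
Let F y := f a y (b y).+1.
Hypotheses (near : near_equilibrium s r) (ra : r \in s a) (r'_new : r' \in E a :\: s a)
  (r'_best : forall y, y \in E a :\: s a -> (F y <= F r')%O) (r_beaten : (F r < F r')%O).
Let s' := reassign s a (r' |: s a :\ r).

Let r'E : r' \in E a. Proof. by case/setDP: r'_new. Qed.
Let r's : r' \notin s a. Proof. by case/setDP: r'_new. Qed.

Let step_best y : y \in E a :\: s' a -> (F y <= F r')%O.
Proof.
rewrite reassign_at !inE negb_or negb_and negbK => /andP [/andP [_ yr] yE].
case: (eqVneq y r) yr => [-> _|_ /= ys]; first exact: ltW.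
by apply: r'_best; rewrite inE ys.
Qed.

Lemma step_near : near_equilibrium s' r'.
Proof.
have [feas sb stable] := near; split.
- move=> a'; case: (eqVneq a' a) => [->|/reassign_other ->]; last exact: feas.
  have [sE ka] := feas a; rewrite reassign_at subUset sub1set r'E.
  rewrite (subset_trans (subD1set _ _) sE) cardsU1 !inE (negPf r's) andbF.
  by rewrite -ka (cardsD1 r (s a)) ra.
- by move=> x; have := load_reassign_swap x ra r's; rewrite -/s' sb; lia.
move=> a' x y; case: (eqVneq a' a) => [->|/reassign_other ->]; last exact: stable.
move=> xs' /step_best yr'; apply: le_trans yr' _.
move: xs'; rewrite reassign_at !inE => /orP [/eqP ->|/andP [_ xs]]; first exact: f_decr.
exact: stable.
Qed.

Lemma step_fragility : fragility s' < fragility s.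
Proof.
rewrite /fragility (bigD1 a) //= [in X in _ < X](bigD1 a) //=.
have -> : \sum_(a' | a' != a) #|[set x in s' a' | ~~ robust s' a' x]| =
          \sum_(a' | a' != a) #|[set x in s a' | ~~ robust s a' x]|.
  by apply: eq_bigr => a' /reassign_other; rewrite /robust => ->.
rewrite ltn_add2r (cardsD1 r [set x in s a | _]) !inE ra /=.
have -> /= : ~~ robust s a r.
  by apply/forall_inPn; exists r'; rewrite // -ltNge.
rewrite add1n ltnS; apply: subset_leq_card; apply/subsetP => x.
rewrite !inE; case: (eqVneq x r') => [->|xr'] /=.
  suff -> : robust s' a r' by rewrite andbF.
  by apply/forall_inP => y /step_best.
rewrite reassign_at !inE (negPf xr') /= => /andP [/andP [xr xs] x_fragile].
rewrite xr xs /=; apply: contra x_fragile => /forall_inP x_robust.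
apply/forall_inP => y; case: (eqVneq y r) => [-> _|yr].
  by apply: le_trans (ltW r_beaten) _; apply: x_robust.
by rewrite reassign_at !inE negb_or negb_and negbK (negPf yr) /= => /andP [/andP [_ ys] yE];
  apply: x_robust; rewrite inE ys.
Qed.

Lemma step_covered : covered s <= covered s'.
Proof.
have [_ sb _] := near; have [_ s'b _] := step_near.
rewrite (covered_shift sb) (covered_shift s'b) leq_add2l.
case/boolP: (P r && (b r == 0)) => // /andP [Pr /eqP br0].
rewrite lt0b; apply: contraTT r_beaten => /nandP r'_poor; rewrite -leNgt /F br0.
apply/ltW/f_solo => //; case: r'_poor => [-> // | nz].
by rewrite ltnS lt0n nz orbT.
Qed.

End Step.

Lemma near_equilibrium_settles s r : near_equilibrium s r ->
  exists2 s', equilibrium k s' & covered s <= covered s'.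
Proof.
have [m] := ubnP (fragility s); elim: m => // m IH in s r *; rewrite ltnS => fs near.
case: (boolP [exists a, (r \in s a) && ~~ robust s a r]); last first.
  move=> /existsPn r_robust; exists s => //; apply: near_equilibrium_robust near _ => a ra.
  by move: (r_robust a); rewrite ra negbK.
case/existsP => a /andP [ra /forall_inPn [y0 y0_new]]; rewrite -ltNge => y0_beats.
case: (arg_maxP (fun y => f a y (b y).+1) y0_new) => r' r'_new r'_best.
have r_beaten : (f a r (b r).+1 < f a r' (b r').+1)%O by apply: lt_le_trans (r'_best _ y0_new).
have [|s'' eq_s'' cov_s''] := IH _ r' _ (step_near near ra r'_new r'_best r_beaten).
  by apply: leq_trans fs; apply: step_fragility r_beaten.
exists s'' => //; exact: leq_trans (step_covered near ra r'_new r'_best r_beaten) cov_s''.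
Qed.
End Settling.

Lemma equilibrium_add k s a : equilibrium k s -> k a < #|E a| ->
  exists2 s', equilibrium (fun a' => k a' + (a' == a)) s' & covered s <= covered s'.
Proof.
move=> [feas stable] ka; have [sE ska] := feas a.
have [y0 y0_new] : exists y0, y0 \in E a :\: s a.
  apply/set0Pn; apply: contraTneq ka => /eqP; rewrite setD_eq0 => /subset_leq_card.
  by rewrite ska leqNgt.
case: (arg_maxP (fun y => f a y (load s y).+1) y0_new) => y /setDP [yE ys] y_best.
pose s1 := reassign s a (y |: s a).
have s1_load x : load s1 x = load s x + (x == y) by apply: load_reassign_add.
have near1 : near_equilibrium (fun a' => k a' + (a' == a)) (load s) s1 y.
  split=> // [a'|a' x z].
    case: (eqVneq a' a) => [->|ne]; last by rewrite reassign_other // addn0; apply: feas.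
    by rewrite reassign_at subUset sub1set yE sE cardsU1 ys ska addnC.
  case: (eqVneq a' a) => [->|/reassign_other ->]; last exact: stable.
  rewrite reassign_at => /setU1P [->|xs] /(subsetP (setDS _ (subsetUr [set y] (s a)))) z_new.
    exact: le_trans (y_best z z_new) (f_decr _ _ _).
  exact: stable.
have [s' eq_s' cov_s'] := near_equilibrium_settles near1.
exists s' => //; apply: leq_trans cov_s'.
by rewrite (covered_shift s1_load) leq_addr.
Qed.

Lemma equilibrium_raise k k0 s0 : (forall a, k a <= #|E a|) -> (forall a, k0 a <= k a) ->
  equilibrium k0 s0 -> exists2 s, equilibrium k s & covered s0 <= covered s.
Proof.
move=> kE; have [m] := ubnP (\sum_a (k a - k0 a)).
elim: m => // m IH in k0 s0 *; rewrite ltnS => gap k0k eq0.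
case: (boolP [exists a, k0 a < k a]); last first.
  move=> /existsPn k0_full; exists s0 => //; split; last by case: eq0.
  move=> a; have [sE ->] := eq0.1 a; split => //.
  by apply/eqP; rewrite eqn_leq k0k leqNgt k0_full.
case/existsP => a k0a.
have [s1 eq1 cov1] := equilibrium_add eq0 (leq_trans k0a (kE a)).
have [||s eq_s cov_s] := IH _ s1 _ _ eq1.
- apply: leq_trans gap; rewrite [in X in X < _](bigD1 a) // [in X in _ < X](bigD1 a) //=.
  rewrite eqxx addn1 (eq_bigr (fun a' => k a' - k0 a')) => [|a' /negPf ->]; last by rewrite addn0.
  by rewrite ltn_add2r; lia.
- by move=> a'; case: eqVneq => [->|_]; rewrite ?addn1 ?addn0.
by exists s => //; apply: leq_trans cov_s.
Qed.

Theorem exists_equilibrium_max_covered k : (forall a, k a <= #|E a|) ->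
  exists2 s, equilibrium k s & forall t, packing k t -> covered t <= covered s.
Proof.
move=> kE; have [s0 [p0 s0_max s0_best]] := exists_best_packing k.
have k0k a : #|s0 a| <= k a by have /andP [/forallP /(_ a) /andP []] := p0.
have [s eq_s cov_s] := equilibrium_raise kE k0k (best_packing_equilibrium p0 s0_best).
by exists s => // t pt; apply: leq_trans (s0_max t pt) cov_s.
Qed.

End AllocationGame.

Local Open Scope ring_scope.

Lemma exchange_sum_le (R : realDomainType) (U : finType) (E S Z : {set U}) (g : U -> R) :
  Z \subset E -> #|Z| = #|S| ->
  (forall x y, x \in S -> y \in E :\: S -> g y <= g x) ->
  \sum_(z in Z) g z <= \sum_(z in S) g z.
Proof.
move=> ZE ZS g_exch.
rewrite (big_setID S) [leRHS](big_setID Z) setIC lerD2l.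
have card_diff : #|Z :\: S| = #|S :\: Z|.
  by apply/eqP; rewrite -(eqn_add2l #|Z :&: S|) cardsID setIC cardsID ZS.
case: (set_0Vmem (S :\: Z)) => [SZ0|[x0 x0_in]].
  by move: card_diff; rewrite SZ0 cards0 => /eqP; rewrite cards_eq0 => /eqP ->.
case: (arg_minP g x0_in) => x x_in x_min.
apply: (@le_trans _ _ (\sum_(z in Z :\: S) g x)).
  apply: ler_sum => y /setDP [yZ yS]; apply: g_exch; first by case/setDP: x_in.
  by rewrite inE yS (subsetP ZE).
by rewrite !sumr_const card_diff -sumr_const; apply: ler_sum => z /x_min.
Qed.

Section SearchGameAllocation.
Variables (R : realType) (n : nat) (Omega : finType) (G : search_game R n Omega).

Definition max_capacity := (\max_(i < n) K G i)%N.
Definition agent := ('I_n * {set Omega})%type.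
Definition resource := (Omega + 'I_max_capacity)%type.
Definition is_location (x : resource) := if x is inl _ then true else false.
Definition capacity (a : agent) := if a.2 \in Pi G a.1 then K G a.1 else 0%N.
Definition capacity_slots (i : 'I_n) : {set 'I_max_capacity} :=
  [set j : 'I_max_capacity | (j < K G i)%N].
Definition eligible (a : agent) : {set resource} :=
  if a.2 \in Pi G a.1 then inl @: a.2 :|: inr @: capacity_slots a.1 else set0.
Definition marginal_cost (i : 'I_n) k := c G i k - c G i k.-1.
(* The flag records a solitary search; load 0 is evaluated as load 1, so that values are
   nonincreasing from 0.  Slot [j] stands for leaving unit [j.+1] of the capacity unused. *)
Definition value (a : agent) (x : resource) (m : nat) : bool *l R :=
  match x with
  | inl w => ((m <= 1)%N, mu_cond G w a.2 * v G a.1 (maxn m 1) w)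
  | inr j => (false, marginal_cost a.1 j.+1)
  end.

Lemma K_le_max_capacity i : (K G i <= max_capacity)%N.
Proof. exact: (leq_bigmax (F := K G)). Qed.

Lemma mu_set_ge0 C : 0 <= mu_set G C.
Proof. by apply: sumr_ge0 => w _; apply: mu_ge0. Qed.

Lemma mu_cond_ge0 w C : 0 <= mu_cond G w C.
Proof. by apply: divr_ge0; [apply: mu_ge0 | apply: mu_set_ge0]. Qed.

Lemma v_nonincreasing i w m m' : (0 < m)%N -> (m <= m')%N -> v G i m' w <= v G i m w.
Proof.
move=> m_gt0 /subnK <-; elim: (m' - m)%N => // d IH.
by rewrite addSn; apply: le_trans IH; apply: v_decr; rewrite addn_gt0 m_gt0 orbT.
Qed.

Lemma marginal_cost_le i p q : (0 < p)%N -> (p <= q <= K G i)%N ->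
  marginal_cost i p <= marginal_cost i q.
Proof.
move=> p_gt0 /andP [/subnK <-]; elim: (q - p)%N => // d IH; rewrite addSn => dK.
by apply: le_trans (IH (ltnW dK)) _; apply: c_convex; rewrite // addn_gt0 p_gt0 orbT.
Qed.

Lemma value_decr a x m : (value a x m.+1 <= value a x m)%O.
Proof.
case: x => [w|j] /=; last by rewrite lexi_pair /=.
rewrite lexi_pair; case: m => [|[|m]] //=; rewrite !maxnE /= !addn0.
by rewrite ler_wpM2l ?mu_cond_ge0 // v_decr.
Qed.

Lemma value_solo a x y m : is_location x -> ~~ is_location y || (1 < m)%N ->
  (value a y m < value a x 1)%O.
Proof.
case: x => [w|//] _; case: y => [w'|j] /=; rewrite ltxi_pair //.
by case: m => [|[|m]].
Qed.

Lemma inl_inj : injective (@inl Omega 'I_max_capacity). Proof. by move=> ? ? []. Qed.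
Lemma inr_inj : injective (@inr Omega 'I_max_capacity). Proof. by move=> ? ? []. Qed.

Lemma mem_eligible_inl a w : (inl w \in eligible a) = (a.2 \in Pi G a.1) && (w \in a.2).
Proof.
rewrite /eligible; case: ifP => _; last by rewrite inE.
rewrite inE (mem_imset _ _ inl_inj).
by case: imsetP => [[j _ //]|_]; rewrite orbF.
Qed.

Lemma mem_eligible_inr a j :
  (inr j \in eligible a) = (a.2 \in Pi G a.1) && (j < K G a.1)%N.
Proof.
rewrite /eligible; case: ifP => _; last by rewrite inE.
rewrite inE (mem_imset _ _ inr_inj) inE.
by case: imsetP => [[w _ //]|_].
Qed.

Lemma capacity_le_eligible a : (capacity a <= #|eligible a|)%N.
Proof.
rewrite /capacity /eligible; case: ifP => // _.
apply: leq_trans (subset_leq_card (subsetUr _ _)); rewrite card_imset; last exact: inr_inj.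
have -> : capacity_slots a.1 = [set widen_ord (K_le_max_capacity a.1) j | j in 'I_(K G a.1)].
  apply/setP => j; rewrite /capacity_slots inE.
  apply/idP/imsetP => [jK|[j' _ ->]]; last exact: (ltn_ord j').
  by exists (Ordinal jK) => //; apply: val_inj.
rewrite card_imset ?card_ord //.
by move=> j1 j2 /(congr1 val) /= /val_inj.
Qed.

Lemma value_le_real (ssd : solitary_search_dominant G) a x y m m' :
  x \in eligible a -> y \in eligible a -> (value a y m' <= value a x m)%O ->
  (value a y m').2 <= (value a x m).2.
Proof.
case: x => [w|j] xE yE; last by case: y yE => [w'|j'] _; rewrite lexi_pair //=; case: leqP.
move: xE; rewrite mem_eligible_inl => /andP [CP wC].
have [ssd_loc ssd_cost] := ssd _ _ CP _ _ wC wC.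
case: y yE => [w'|j]; rewrite lexi_pair /=; last first.
  rewrite mem_eligible_inr => /andP [_ jK]; case: leqP => //= m1 _.
  apply: le_trans ssd_cost.
  by apply: (marginal_cost_le (p := j.+1)); rewrite // jK /=.
rewrite mem_eligible_inl => /andP [_ w'C].
case: (leqP m' 1) => m'1; case: (leqP m 1) => //= m1 _.
have [ssd2 _] := ssd _ _ CP _ _ wC w'C; apply: le_trans ssd2.
by rewrite ler_wpM2l ?mu_cond_ge0 // v_nonincreasing.
Qed.

Lemma Pi_trivIset i : trivIset (Pi G i).
Proof. by have /and3P [] := Pi_partition G i. Qed.

Lemma cover_Pi i : cover (Pi G i) = setT.
Proof. by have /and3P [/eqP] := Pi_partition G i. Qed.

Lemma cell_in_Pi i w : cell G i w \in Pi G i.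
Proof. by rewrite /cell pblock_mem // cover_Pi inE. Qed.

Lemma cell_eq i C w : C \in Pi G i -> w \in C -> cell G i w = C.
Proof. exact: def_pblock (Pi_trivIset i). Qed.

Definition locs (Y : {set resource}) : {set Omega} := [set w | inl w \in Y].
Definition slots (Y : {set resource}) : {set 'I_max_capacity} := [set j | inr j \in Y].
Definition mix (T : {set Omega}) (D : {set 'I_max_capacity}) : {set resource} :=
  inl @: T :|: inr @: D.

Lemma mem_locs Y w : (w \in locs Y) = (inl w \in Y).
Proof. by rewrite inE. Qed.

Lemma locs_mix T D : locs (mix T D) = T.
Proof.
apply/setP => w; rewrite !inE (mem_imset _ _ inl_inj).
by case: imsetP => [[j _ //]|_]; rewrite orbF.
Qed.

Lemma slots_mix T D : slots (mix T D) = D.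
Proof.
apply/setP => j; rewrite !inE (mem_imset _ _ inr_inj).
by case: imsetP => [[w _ //]|_].
Qed.

Lemma sum_resources (Y : {set resource}) (g : resource -> R) :
  \sum_(x in Y) g x = \sum_(w in locs Y) g (inl w) + \sum_(j in slots Y) g (inr j).
Proof. by rewrite big_sumType; congr (_ + _); apply: eq_bigl => z; rewrite inE. Qed.

Lemma card_resources (Y : {set resource}) : #|Y| = (#|locs Y| + #|slots Y|)%N.
Proof.
rewrite -!sum1_card big_sumType; congr (_ + _)%N; apply: eq_bigl => z; by rewrite inE.
Qed.

Definition profile_of (s : allocation agent resource) : profile n Omega :=
  fun i C => locs (s (i, C)).

Lemma load_inl (s : allocation agent resource) w : (forall a, s a \subset eligible a) ->
  load s (inl w) = #|[set i | w \in profile_of s i (cell G i w)]|.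
Proof.
move=> sE; rewrite /load -(card_imset _ (f := fun i => (i, cell G i w))); last by move=> ? ? [].
apply: eq_card => -[i C]; rewrite inE; apply/idP/imsetP => [isC|[j]].
  have /(subsetP (sE (i, C))) := isC; rewrite mem_eligible_inl /= => /andP [CP wC].
  by exists i; rewrite ?inE /profile_of ?mem_locs (cell_eq CP wC).
by rewrite inE /profile_of mem_locs => ? [-> ->].
Qed.

Lemma msearch_profile_of (s : allocation agent resource) w :
  (forall a, s a \subset eligible a) -> msearch G (profile_of s) w = load s (inl w).
Proof.
move=> sE; rewrite load_inl // -sum1_card [RHS]big_mkcond /=.
by rewrite /msearch; apply: eq_bigr => i _; rewrite inE /searches; case: ifP.
Qed.

Lemma nsearched_profile_of (s : allocation agent resource) :
  (forall a, s a \subset eligible a) -> nsearched G (profile_of s) = covered is_location s.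
Proof.
move=> sE; rewrite /nsearched /covered -(card_imset _ inl_inj); apply: eq_card => -[w|j].
  by rewrite (mem_imset _ _ inl_inj) !inE msearch_profile_of.
by rewrite [RHS]inE; apply/imsetP => -[].
Qed.

Section OwnerAllocation.
Variable p : profile n Omega.

Definition owner w := [pick i | searches G p i w].
Definition owner_allocation : allocation agent resource :=
  [ffun a : agent => inl @: [set w | (cell G a.1 w == a.2) && (owner w == Some a.1)]].

Lemma mem_owner_allocation a x : (x \in owner_allocation a) =
  if x is inl w then (cell G a.1 w == a.2) && (owner w == Some a.1) else false.
Proof.
rewrite ffunE; case: x => [w|j]; first by rewrite (mem_imset _ _ inl_inj) inE.
by apply/imsetP => -[].
Qed.

Lemma owner_allocation_eligible a :
  owner_allocation a \subset [set x in eligible a | is_location x].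
Proof.
case: a => i C; apply/subsetP => -[w|j]; rewrite mem_owner_allocation //= => /andP [/eqP <- _].
by rewrite !inE mem_eligible_inl /= cell_in_Pi /cell mem_pblock cover_Pi inE.
Qed.

Lemma load_owner_allocation w : load owner_allocation (inl w) = (owner w != None).
Proof.
have sE a : owner_allocation a \subset eligible a.
  apply: subset_trans (owner_allocation_eligible a) _.
  by apply/subsetP => x; rewrite inE => /andP [].
rewrite load_inl //.
have -> : [set i | w \in profile_of owner_allocation i (cell G i w)] = [set i | owner w == Some i].
  by apply/setP => i; rewrite !inE /profile_of mem_owner_allocation eqxx.
case: (owner w) => [i|] /=; last by rewrite -(cards0 'I_n); apply: eq_card => i; rewrite inE.
by rewrite -(cards1 i); apply: eq_card => i'; rewrite !inE eq_sym.
Qed.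

Lemma packing_owner_allocation : is_profile G p ->
  packing eligible is_location capacity owner_allocation.
Proof.
move=> p_prof; apply/andP; split; apply/forallP; last first.
  case=> [w|j]; first by rewrite load_owner_allocation leq_b1.
  rewrite /load (_ : [set a | _] = set0) ?cards0 //.
  by apply/setP => a; rewrite !inE mem_owner_allocation.
move=> a; rewrite owner_allocation_eligible /= ffunE card_imset; last exact: inl_inj.
rewrite /capacity; case: ifP => CP; last first.
  rewrite leqn0 cards_eq0; apply/eqP/setP => w; rewrite !inE.
  by apply: contraFF CP => /andP [/eqP <- _]; apply: cell_in_Pi.
apply: leq_trans (proj2 (p_prof _ _ CP)); apply/subset_leq_card/subsetP => w.
rewrite inE => /andP [/eqP <- /eqP]; rewrite /owner.
by case: pickP => // i + [<-].
Qed.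

Lemma covered_owner_allocation : covered is_location owner_allocation = nsearched G p.
Proof.
rewrite /nsearched /covered -(card_imset _ inl_inj); apply/esym/eq_card => -[w|j]; last first.
  by rewrite [RHS]inE; apply/imsetP => -[].
rewrite (mem_imset _ _ inl_inj) !inE load_owner_allocation lt0b /msearch /owner.
case: pickP => [i iw|none] /=; first by rewrite (bigD1 i) //= iw.
by rewrite big1 // => i _; rewrite none.
Qed.

End OwnerAllocation.

Lemma payoff_cells (p : profile n Omega) i : (forall C, C \in Pi G i -> p i C \subset C) ->
  payoff G i p = \sum_(C in Pi G i) mu_set G C *
    (\sum_(w in p i C) mu_cond G w C * v G i (msearch G p w) w - c G i #|p i C|).
Proof.
move=> p_cells; rewrite /payoff (eq_bigl (mem (cover (Pi G i)))) => [|w]; last first.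
  by rewrite cover_Pi !inE.
rewrite big_trivIset ?Pi_trivIset //=.
apply: eq_bigr => C CP.
have mu_C : mu_set G C != 0 by rewrite gt_eqF //; exact: mu_cell_gt0 CP.
have -> : \sum_(w in p i C) mu_cond G w C * v G i (msearch G p w) w =
    \sum_(w in C) (w \in p i C)%:R * (mu_cond G w C * v G i (msearch G p w) w).
  rewrite big_mkcond [RHS]big_mkcond; apply: eq_bigr => w _.
  case: (boolP (w \in p i C)) => [wp|_]; last by case: ifP; rewrite ?mul0r.
  by rewrite (subsetP (p_cells C CP) _ wp) mul1r.
rewrite mulrBr mulr_sumr.
have -> : mu_set G C * c G i #|p i C| = \sum_(w in C) mu G w * c G i #|p i C|.
  by rewrite /mu_set mulr_suml.
rewrite -sumrB; apply: eq_bigr => w wC.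
by rewrite /searches (cell_eq CP wC) /mu_cond; field.
Qed.

Definition others (p : profile n Omega) i w := (\sum_(j | j != i) searches G p j w)%N.

Lemma msearch_others (p : profile n Omega) i w :
  msearch G p w = (searches G p i w + others p i w)%N.
Proof. by rewrite /msearch (bigD1 i). Qed.

Lemma others_deviate (p : profile n Omega) i (t : strategy Omega) w :
  others (deviate p i t) i w = others p i w.
Proof. by apply: eq_bigr => j /negPf; rewrite /searches /deviate => ->. Qed.

Lemma deviate_at (p : profile n Omega) i (t : strategy Omega) : deviate p i t i = t.
Proof. by rewrite /deviate eqxx. Qed.

Definition top_slots i t : {set 'I_max_capacity} :=
  [set j : 'I_max_capacity | (t <= j < K G i)%N].

Lemma big_top_slots (T : Type) (idx : T) (op : Monoid.law idx) i t (F : nat -> T) :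
  \big[op/idx]_(j in top_slots i t) F j = \big[op/idx]_(t <= j < K G i) F j.
Proof.
rewrite big_geq_mkord (big_ord_widen_cond _ _ _ (K_le_max_capacity i)).
by apply: eq_bigl => j; rewrite inE.
Qed.

Lemma card_top_slots i t : #|top_slots i t| = (K G i - t)%N.
Proof. by rewrite -sum1_card (big_top_slots _ i t (fun=> 1%N)) sum_nat_const_nat muln1. Qed.

Lemma sum_top_slots_cost i t : (t <= K G i)%N ->
  \sum_(j in top_slots i t) marginal_cost i j.+1 = c G i (K G i) - c G i t.
Proof.
by rewrite (big_top_slots _ i t (fun j => marginal_cost i j.+1)); apply: telescope_sumr.
Qed.

Lemma slots_cost_le i t (D : {set 'I_max_capacity}) : (t <= K G i)%N ->
  D \subset capacity_slots i -> #|D| = (K G i - t)%N ->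
  \sum_(j in D) marginal_cost i j.+1 <= c G i (K G i) - c G i t.
Proof.
move=> tK DK D_card; rewrite -sum_top_slots_cost //.
apply: (exchange_sum_le DK); first by rewrite card_top_slots.
move=> x y; rewrite !inE => /andP [tx xK] /andP [yt yK].
by apply: marginal_cost_le => //; lia.
Qed.

Section EquilibriumIsNash.
Variable s : allocation agent resource.
Hypotheses (ssd : solitary_search_dominant G) (s_eq : equilibrium eligible value capacity s).

Definition gain a x := (value a x (load s x - (x \in s a)).+1).2.

Let s_eligible a : s a \subset eligible a.
Proof. by have [] := s_eq.1 a. Qed.

Lemma gain_exchange a x y : x \in s a -> y \in eligible a :\: s a -> gain a y <= gain a x.
Proof.
move=> xs y_new; have x_load : (load s x - (x \in s a)).+1 = load s x.
  by rewrite xs subn1 prednK // card_gt0; apply/set0Pn; exists a; rewrite inE.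
rewrite /gain x_load; case/setDP: (y_new) => yE /negPf ->; rewrite subn0.
by apply: value_le_real => //; [exact: (subsetP (s_eligible a)) | exact: s_eq.2].
Qed.

Lemma gain_inl i C w : C \in Pi G i -> w \in C ->
  gain (i, C) (inl w) = mu_cond G w C * v G i (others (profile_of s) i w).+1 w.
Proof.
move=> CP wC; rewrite /gain -msearch_profile_of // (msearch_others _ i).
by rewrite /searches /profile_of mem_locs (cell_eq CP wC) addKn /= (maxn_idPl _).
Qed.

Lemma cell_best_response i C (T : {set Omega}) :
  C \in Pi G i -> T \subset C -> (#|T| <= K G i)%N ->
  \sum_(w in T) gain (i, C) (inl w) - c G i #|T| <=
  \sum_(w in locs (s (i, C))) gain (i, C) (inl w) - c G i #|locs (s (i, C))|.
Proof.
(* Padded with the top [K - #|T|] slots, [T] becomes a feasible holding whose total gain is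
   that of [T] minus [c #|T|], up to the constant [c K]. *)
move=> CP TC TK; set S := locs (s (i, C)).
have [_ s_card] := s_eq.1 (i, C); rewrite /capacity /= CP in s_card.
have S_card : (#|S| + #|slots (s (i, C))|)%N = K G i by rewrite -card_resources.
have slots_cost : \sum_(j in slots (s (i, C))) gain (i, C) (inr j) <= c G i (K G i) - c G i #|S|.
  apply: slots_cost_le => /=; [lia | | by rewrite -S_card addKn].
  apply/subsetP => j; rewrite inE => /(subsetP (s_eligible (i, C))).
  by rewrite mem_eligible_inr inE => /andP [].
set Z := mix T (top_slots i #|T|).
have Z_eligible : Z \subset eligible (i, C).
  apply/subsetP => x; rewrite inE => /orP [] /imsetP [y y_in ->].
    by rewrite mem_eligible_inl /= CP (subsetP TC).
  by rewrite mem_eligible_inr /= CP; move: y_in; rewrite inE => /andP [].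
have Z_card : #|Z| = #|s (i, C)|.
  by rewrite card_resources locs_mix slots_mix card_top_slots s_card; lia.
have := exchange_sum_le Z_eligible Z_card (@gain_exchange (i, C)).
rewrite !sum_resources locs_mix slots_mix.
have -> : \sum_(j in top_slots i #|T|) gain (i, C) (inr j) = c G i (K G i) - c G i #|T|.
  exact: sum_top_slots_cost.
lra.
Qed.

Lemma equilibrium_pure_nash : pure_nash G (profile_of s).
Proof.
have s_cells i C : C \in Pi G i -> profile_of s i C \subset C.
  move=> CP; apply/subsetP => w; rewrite mem_locs => /(subsetP (s_eligible (i, C))).
  by rewrite mem_eligible_inl => /andP [].
have s_prof : is_profile G (profile_of s).
  move=> i C CP; split; first exact: s_cells.
  have [_] := s_eq.1 (i, C); rewrite /capacity /= CP card_resources => <-.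
  exact: leq_addr.
split=> // i t t_strat.
have dev_cells C : C \in Pi G i -> deviate (profile_of s) i t i C \subset C.
  by move=> CP; rewrite deviate_at; case: (t_strat C CP).
rewrite (payoff_cells dev_cells) (payoff_cells (s_cells i)).
apply: ler_sum => C CP; apply: ler_wpM2l; first exact: mu_set_ge0.
have [tC tK] := t_strat C CP; rewrite deviate_at.
have -> : \sum_(w in t C) mu_cond G w C * v G i (msearch G (deviate (profile_of s) i t) w) w =
          \sum_(w in t C) gain (i, C) (inl w).
  apply: eq_bigr => w wT; have wC := subsetP tC _ wT.
  rewrite gain_inl // (msearch_others _ i) others_deviate.
  by rewrite /searches deviate_at (cell_eq CP wC) wT.
have -> : \sum_(w in profile_of s i C) mu_cond G w C * v G i (msearch G (profile_of s) w) w =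
          \sum_(w in profile_of s i C) gain (i, C) (inl w).
  apply: eq_bigr => w wS; have wC := subsetP (s_cells i C CP) _ wS.
  by rewrite gain_inl // (msearch_others _ i) /searches (cell_eq CP wC) wS.
exact: cell_best_response.
Qed.

End EquilibriumIsNash.

End SearchGameAllocation.

Theorem corollary2 (R : realType) (n : nat) (Omega : finType)
  (G : search_game R n Omega) :
  solitary_search_dominant G ->
  exists s : profile n Omega, pure_nash G s /\ location_maximizing G s.
Proof.
move=> ssd.
have [s s_eq s_max] := exists_equilibrium_max_covered (@value_decr _ _ _ G)
  (@value_solo _ _ _ G) (@capacity_le_eligible _ _ _ G).
have s_eligible a : s a \subset eligible G a by have [] := s_eq.1 a.
have s_nash := equilibrium_pure_nash ssd s_eq.
exists (profile_of s); split => //; split; first by case: s_nash.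
move=> p p_prof; rewrite nsearched_profile_of // -covered_owner_allocation.
exact/s_max/packing_owner_allocation.
Qed.
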